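(* Let $z$ lie in the upper half-plane and let $E_4,\Delta_{24}$ and $\rho_n$ ($n\in\mathbb{N}$) be as in the context. Then for every integer $n\geq 3$, $$\rho_n(z)=2E_4(z)\,\rho_{n-1}(z)-E_4(z)^2\,\rho_{n-2}(z)+2^8\Delta_{24}(z)\,\rho_{n-3}(z).$$
   Context: For $z$ with $\mathrm{Im}(z)>0$ put $q=e^{\pi\sqrt{-1}z}$ and define $\vartheta_2(z)=\sum_{m\in\mathbb{Z}}q^{(m+1/2)^2}$, $\vartheta_3(z)=\sum_{m\in\mathbb{Z}}q^{m^2}$, $\vartheta_4(z)=\sum_{m\in\mathbb{Z}}(-q)^{m^2}$. Define $E_4(z)=\frac12(\vartheta_2(z)^8+\vartheta_3(z)^8+\vartheta_4(z)^8)$, $\Delta_{24}(z)=\left(\frac{\vartheta_2(z)\vartheta_3(z)\vartheta_4(z)}{2}\right)^8$, and for a nonnegative integer $n$, $$\rho_n(z)=\frac{\vartheta_3(z)^{8(n+1)+4}-\vartheta_2(z)^{8(n+1)+4}-\vartheta_4(z)^{8(n+1)+4}}{(\vartheta_2(z)\vartheta_3(z)\vartheta_4(z))^4}.$$ *)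

From Stdlib Require Import Reals.
From Coquelicot Require Import Coquelicot.
Open Scope C_scope.

Notation CC := Complex.C.

Definition cexp (w : CC) : CC :=
  (exp (Re w) * cos (Im w), exp (Re w) * sin (Im w))%R.

(* q^t := e^{pi i z t} where q = e^{pi i z}, t real *)
Definition qpow (z : CC) (t : R) : CC := cexp (RtoC PI * Ci * z * RtoC t).

(* Sum over m in Z, as the limit of the symmetric partial sums
   sum_{m=-N}^{N} f m (real and imaginary parts taken as limits). *)
Definition partial_Z (f : Z -> CC) (N : nat) : CC :=
  sum_n (fun k : nat => f (Z.of_nat k - Z.of_nat N)%Z) (2 * N).
Definition sum_Z (f : Z -> CC) : CC :=
  (real (Lim_seq (fun N => Re (partial_Z f N))), real (Lim_seq (fun N => Im (partial_Z f N)))).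

Definition theta2 (z : CC) : CC := sum_Z (fun m => qpow z ((IZR m + /2) ^ 2)%R).
Definition theta3 (z : CC) : CC := sum_Z (fun m => qpow z (IZR m ^ 2)%R).
(* (-q)^{m^2} = (-1)^{m^2} q^{m^2} *)
Definition theta4 (z : CC) : CC :=
  sum_Z (fun m => pow_n (RtoC (-1)) (Z.to_nat (m * m)) * qpow z (IZR m ^ 2)%R).

Definition E4 (z : CC) : CC :=
  / 2 * (pow_n (theta2 z) 8 + pow_n (theta3 z) 8 + pow_n (theta4 z) 8).

Definition Delta24 (z : CC) : CC :=
  pow_n (theta2 z * theta3 z * theta4 z / 2) 8.

Definition rho (n : nat) (z : CC) : CC :=
  (pow_n (theta3 z) (8 * (n + 1) + 4) - pow_n (theta2 z) (8 * (n + 1) + 4)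
     - pow_n (theta4 z) (8 * (n + 1) + 4))
  / pow_n (theta2 z * theta3 z * theta4 z) 4.

(* Since 8(n+1)+4 = 12 + 8n, rho_n is a fixed linear combination of the n-th powers of
   u = theta3^8, v = theta2^8 and w = theta4^8, hence it satisfies the linear recurrence with
   characteristic polynomial (t-u)(t-v)(t-w).  Here u+v+w = 2 E4 and uvw = 2^8 Delta24 by
   definition, while uv+vw+wu = E4^2 is equivalent to Jacobi's identity
   theta3^4 = theta2^4 + theta4^4.  Jacobi's identity follows from the duplication formulas
     theta3(z)^2 = theta3(2z)^2 + theta2(2z)^2,   theta4(z)^2 = theta3(2z)^2 - theta2(2z)^2,
     theta2(z)^2 = 2 theta2(2z) theta3(2z),
   obtained by expanding the squares as absolutely convergent double series over Z^2 and
   reindexing along (j, k) |-> (j + k, j - k). *)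

From Stdlib Require Import Reals.
From Coquelicot Require Import Coquelicot.
Open Scope C_scope.
From Stdlib Require Import List Permutation ZArith Lia Lra.
From Stdlib Require Import ClassicalEpsilon FunctionalExtensionality.
Import ListNotations.

Lemma Cmod_sub_le (a b : C) : (Cmod (a - b) <= Cmod a + Cmod b)%R.
Proof. unfold Cminus; rewrite <- (Cmod_opp b); apply Cmod_triangle. Qed.

Lemma Im_le_Cmod (c : C) : (Rabs (Im c) <= Cmod c)%R.
Proof. eapply Rle_trans; [apply Rmax_r | apply Rmax_Cmod]. Qed.

Lemma Cmod_le_Rabs_parts (x : C) : (Cmod x <= Rabs (Re x) + Rabs (Im x))%R.
Proof.
  unfold Cmod, Re, Im; pose proof (Rabs_pos (fst x)); pose proof (Rabs_pos (snd x)).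
  rewrite <- (sqrt_pow2 (Rabs (fst x) + Rabs (snd x))) by lra.
  apply sqrt_le_1_alt; rewrite <- (pow2_abs (fst x)), <- (pow2_abs (snd x)); nra.
Qed.

Lemma pow_n_Cpow (x : C) n : pow_n x n = x ^ n.
Proof. induction n as [|n IH]; [reflexivity | simpl; now rewrite <- IH]. Qed.

(** * Finite sums over lists *)

Fixpoint lsum {X} (f : X -> C) (l : list X) : C :=
  match l with [] => 0 | x :: l' => f x + lsum f l' end.

Fixpoint lsumR {X} (f : X -> R) (l : list X) : R :=
  match l with [] => 0%R | x :: l' => (f x + lsumR f l')%R end.

(* Membership and equality are decided classically, so index types need no decidable
   equality. *)
Definition memb {X} (L : list X) (x : X) : bool :=
  if excluded_middle_informative (In x L) then true else false.

Definition outside {X} (L0 L : list X) : list X := filter (fun x => negb (memb L0 x)) L.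

Definition dedup {X} (l : list X) : list X :=
  nodup (fun x y => excluded_middle_informative (x = y)) l.

Lemma NoDup_dedup {X} (l : list X) : NoDup (dedup l).
Proof. apply NoDup_nodup. Qed.

Lemma in_dedup {X} (l : list X) x : In x (dedup l) <-> In x l.
Proof. apply nodup_In. Qed.

Section FiniteSums.
Context {X : Type}.
Implicit Types (f g : X -> C) (w v : X -> R) (l L M : list X).

Lemma memb_spec L x : memb L x = true <-> In x L.
Proof. unfold memb; destruct excluded_middle_informative; intuition discriminate. Qed.

Lemma in_outside L0 L x : In x (outside L0 L) <-> In x L /\ ~ In x L0.
Proof.
  unfold outside; rewrite filter_In; pose proof (memb_spec L0 x).
  destruct (memb L0 x); intuition discriminate.
Qed.

Lemma filter_memb_perm L0 L : NoDup L0 -> NoDup L -> incl L0 L ->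
  Permutation (filter (memb L0) L) L0.
Proof.
  intros N0 N Hincl; apply NoDup_Permutation; [now apply NoDup_filter | exact N0 |].
  intros x; rewrite filter_In, memb_spec; intuition.
Qed.

Lemma lsum_app f l1 l2 : lsum f (l1 ++ l2) = lsum f l1 + lsum f l2.
Proof. induction l1 as [|x l IH]; simpl; [ring | rewrite IH; ring]. Qed.

Lemma lsum_map {Y} f (e : Y -> X) (l : list Y) : lsum f (map e l) = lsum (fun y => f (e y)) l.
Proof. induction l as [|y l IH]; simpl; congruence. Qed.

Lemma lsum_ext f g l : (forall x, f x = g x) -> lsum f l = lsum g l.
Proof. intros H; induction l as [|x l IH]; simpl; congruence. Qed.

Lemma lsum_scal c f l : lsum (fun x => c * f x) l = c * lsum f l.
Proof. induction l as [|x l IH]; simpl; [ring | rewrite IH; ring]. Qed.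

Lemma lsum_perm f l1 l2 : Permutation l1 l2 -> lsum f l1 = lsum f l2.
Proof. induction 1; simpl; try congruence; ring. Qed.

Lemma lsum_filter f (P : X -> bool) l :
  lsum f l = lsum f (filter P l) + lsum f (filter (fun x => negb (P x)) l).
Proof. induction l as [|x l IH]; simpl; [ring | destruct (P x); simpl; rewrite IH; ring]. Qed.

Lemma lsum_split_incl f L0 L : NoDup L0 -> NoDup L -> incl L0 L ->
  lsum f L = lsum f L0 + lsum f (outside L0 L).
Proof.
  intros N0 N Hincl; rewrite (lsum_filter f (memb L0) L).
  now rewrite (lsum_perm f _ _ (filter_memb_perm L0 L N0 N Hincl)).
Qed.

Lemma Cmod_lsum_le f l : (Cmod (lsum f l) <= lsumR (fun x => Cmod (f x)) l)%R.
Proof.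
  induction l as [|x l IH]; simpl; [rewrite Cmod_0; lra |].
  eapply Rle_trans; [apply Cmod_triangle | lra].
Qed.

Lemma lsumR_app w l1 l2 : lsumR w (l1 ++ l2) = (lsumR w l1 + lsumR w l2)%R.
Proof. induction l1 as [|x l IH]; simpl; [ring | rewrite IH; ring]. Qed.

Lemma lsumR_map {Y} w (e : Y -> X) (l : list Y) : lsumR w (map e l) = lsumR (fun y => w (e y)) l.
Proof. induction l as [|y l IH]; simpl; congruence. Qed.

Lemma lsumR_scal c w l : lsumR (fun x => c * w x)%R l = (c * lsumR w l)%R.
Proof. induction l as [|x l IH]; simpl; [ring | rewrite IH; ring]. Qed.

Lemma lsumR_perm w l1 l2 : Permutation l1 l2 -> lsumR w l1 = lsumR w l2.
Proof. induction 1; simpl; try congruence; ring. Qed.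

Lemma lsumR_filter w (P : X -> bool) l :
  lsumR w l = (lsumR w (filter P l) + lsumR w (filter (fun x => negb (P x)) l))%R.
Proof. induction l as [|x l IH]; simpl; [ring | destruct (P x); simpl; rewrite IH; ring]. Qed.

Lemma lsumR_le w v l : (forall x, In x l -> w x <= v x)%R -> (lsumR w l <= lsumR v l)%R.
Proof.
  induction l as [|x l IH]; simpl; intros H; [lra |].
  apply Rplus_le_compat; auto.
Qed.

Lemma lsumR_nonneg w l : (forall x, 0 <= w x)%R -> (0 <= lsumR w l)%R.
Proof. intros H; induction l as [|x l IH]; simpl; [lra | specialize (H x); lra]. Qed.

Lemma lsumR_incl w L M : (forall x, 0 <= w x)%R -> NoDup L -> NoDup M -> incl L M ->
  (lsumR w L <= lsumR w M)%R.
Proof.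
  intros Hw NL NM Hincl; rewrite (lsumR_filter w (memb L) M).
  rewrite (lsumR_perm w _ _ (filter_memb_perm L M NL NM Hincl)).
  pose proof (lsumR_nonneg w (filter (fun x => negb (memb L x)) M) Hw); lra.
Qed.

Lemma lsumR_ext w v l : (forall x, In x l -> w x = v x) -> lsumR w l = lsumR v l.
Proof. intros H; apply Rle_antisym; apply lsumR_le; intros x Hx; rewrite H; auto; lra. Qed.

End FiniteSums.

(** * Unconditional summation *)

(* Convergence along the net of finite index sets; unlike the symmetric partial sums of
   [sum_Z], it is invariant under arbitrary bijections of the index set. *)
Definition is_usum {X} (f : X -> C) (S : C) : Prop :=
  forall eps : R, (0 < eps)%R ->
  exists L0, forall L, NoDup L -> incl L0 L -> (Cmod (lsum f L - S) < eps)%R.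

Definition abs_tail_le {X} (f : X -> C) (L0 : list X) (e : R) : Prop :=
  forall L, NoDup L -> (forall x, In x L -> ~ In x L0) ->
  (lsumR (fun x => Cmod (f x)) L <= e)%R.

Definition abs_summable {X} (f : X -> C) : Prop :=
  forall eps : R, (0 < eps)%R -> exists L0, abs_tail_le f L0 eps.

Section UnconditionalSums.
Context {X : Type}.
Implicit Types (f g : X -> C) (L M : list X).
Local Open Scope R_scope.

Lemma is_usum_unique f S T : is_usum f S -> is_usum f T -> S = T.
Proof.
  intros HS HT.
  enough (Cmod (S - T) = 0) as E.
  { apply Cmod_eq_0 in E. replace S with (S - T + T)%C by ring; rewrite E; ring. }
  apply Rle_antisym; [| apply Cmod_ge_0].
  apply Rnot_lt_le; intros Hpos.
  destruct (HS (Cmod (S - T) / 2)) as [L1 H1]; [lra |].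
  destruct (HT (Cmod (S - T) / 2)) as [L2 H2]; [lra |].
  set (L := dedup (L1 ++ L2)).
  assert (I1 : incl L1 L) by (intros x Hx; apply in_dedup, in_or_app; auto).
  assert (I2 : incl L2 L) by (intros x Hx; apply in_dedup, in_or_app; auto).
  specialize (H1 L (NoDup_dedup _) I1); specialize (H2 L (NoDup_dedup _) I2).
  pose proof (Cmod_sub_le (lsum f L - T) (lsum f L - S)) as Htri.
  replace (lsum f L - T - (lsum f L - S))%C with (S - T)%C in Htri by ring.
  lra.
Qed.

Lemma is_usum_ext f g S : (forall x, f x = g x) -> is_usum f S -> is_usum g S.
Proof.
  intros E H eps Heps; destruct (H eps Heps) as [L0 H0]; exists L0.
  intros L NL IL; rewrite <- (lsum_ext f g L E); auto.
Qed.

Lemma is_usum_scal c f S : is_usum f S -> is_usum (fun x => c * f x)%C (c * S).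
Proof.
  intros H eps Heps.
  destruct (H (eps / (Cmod c + 1))) as [L0 H0].
  { pose proof (Cmod_ge_0 c); apply Rdiv_lt_0_compat; lra. }
  exists L0; intros L NL IL; specialize (H0 L NL IL).
  rewrite lsum_scal.
  replace (c * lsum f L - c * S)%C with (c * (lsum f L - S))%C by ring.
  rewrite Cmod_mult.
  pose proof (Cmod_ge_0 c); pose proof (Cmod_ge_0 (lsum f L - S)).
  apply Rle_lt_trans with (Cmod c * (eps / (Cmod c + 1))).
  - apply Rmult_le_compat_l; lra.
  - apply Rmult_lt_reg_r with (Cmod c + 1); [lra |].
    field_simplify; nra.
Qed.

Lemma is_usum_bij {Y} (e : Y -> X) (e' : X -> Y) f S :
  (forall x, e (e' x) = x) -> (forall y, e' (e y) = y) ->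
  is_usum f S -> is_usum (fun y => f (e y)) S.
Proof.
  intros K1 K2 H eps Heps; destruct (H eps Heps) as [L0 H0].
  exists (map e' L0); intros L NL IL.
  rewrite <- lsum_map; apply H0.
  - apply FinFun.Injective_map_NoDup; auto.
    intros a b E; rewrite <- (K2 a), <- (K2 b), E; auto.
  - intros x Hx; rewrite <- (K1 x); apply in_map, IL, in_map, Hx.
Qed.

Lemma lsum_close_of_abs_tail f L0 L e : abs_tail_le f L0 e ->
  NoDup L0 -> NoDup L -> incl L0 L -> Cmod (lsum f L - lsum f L0) <= e.
Proof.
  intros Ht N0 NL IL; rewrite (lsum_split_incl f L0 L N0 NL IL).
  replace (lsum f L0 + lsum f (outside L0 L) - lsum f L0)%C with (lsum f (outside L0 L)) by ring.
  eapply Rle_trans; [apply Cmod_lsum_le |].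
  apply Ht; [now apply NoDup_filter | intros x; rewrite in_outside; tauto].
Qed.

Lemma abs_summable_bounded f : abs_summable f -> exists B, abs_tail_le f [] B.
Proof.
  intros H; destruct (H 1 Rlt_0_1) as [L0 H0].
  exists (lsumR (fun x => Cmod (f x)) (dedup L0) + 1); intros L NL _.
  rewrite (lsumR_filter _ (memb L0) L).
  apply Rplus_le_compat.
  - apply lsumR_incl; [intros; apply Cmod_ge_0 | now apply NoDup_filter | apply NoDup_dedup |].
    intros x; rewrite filter_In, memb_spec, in_dedup; tauto.
  - apply H0; [now apply NoDup_filter |].
    intros x Hx; apply (in_outside L0 L x) in Hx; tauto.
Qed.

Lemma abs_tail_le_mono f L0 L1 e :
  incl L0 L1 -> abs_tail_le f L0 e -> abs_tail_le f L1 e.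
Proof. intros I H L NL HL; apply H; auto; intros x Hx Hx0; apply (HL x Hx), I, Hx0. Qed.

End UnconditionalSums.

Definition lefts {X Y} (l : list (X + Y)) : list X :=
  flat_map (fun s => match s with inl a => [a] | inr _ => [] end) l.
Definition rights {X Y} (l : list (X + Y)) : list Y :=
  flat_map (fun s => match s with inl _ => [] | inr b => [b] end) l.

Section SumType.
Context {X Y : Type}.
Implicit Types (l : list (X + Y)).

Lemma in_lefts l a : In a (lefts l) <-> In (inl a) l.
Proof.
  induction l as [|[b|b] l IH]; simpl; [tauto | |]; rewrite IH;
  intuition congruence.
Qed.

Lemma in_rights l b : In b (rights l) <-> In (inr b) l.
Proof.
  induction l as [|[a|a] l IH]; simpl; [tauto | |]; rewrite IH;
  intuition congruence.
Qed.

Lemma NoDup_lefts l : NoDup l -> NoDup (lefts l).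
Proof.
  induction 1 as [|[a|a] l Hx _ IH]; simpl; [constructor | | exact IH].
  constructor; [rewrite in_lefts |]; auto.
Qed.

Lemma NoDup_rights l : NoDup l -> NoDup (rights l).
Proof.
  induction 1 as [|[a|a] l Hx _ IH]; simpl; [constructor | exact IH |].
  constructor; [rewrite in_rights |]; auto.
Qed.

Lemma lsum_lefts_rights (h : X + Y -> C) l :
  lsum h l = lsum (fun a => h (inl a)) (lefts l) + lsum (fun b => h (inr b)) (rights l).
Proof. induction l as [|[a|a] l IH]; simpl; rewrite ?IH; ring. Qed.

Lemma is_usum_sum_type (h : X + Y -> C) S T :
  is_usum (fun a => h (inl a)) S -> is_usum (fun b => h (inr b)) T -> is_usum h (S + T).
Proof.
  intros HS HT eps Heps.
  destruct (HS (eps / 2)%R) as [L1 H1]; [lra |].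
  destruct (HT (eps / 2)%R) as [L2 H2]; [lra |].
  exists (map inl L1 ++ map inr L2); intros L NL IL.
  assert (E1 : (Cmod (lsum (fun a => h (inl a)) (lefts L) - S) < eps / 2)%R).
  { apply H1; [now apply NoDup_lefts |].
    intros a Ha; apply in_lefts, IL, in_or_app; left; now apply in_map. }
  assert (E2 : (Cmod (lsum (fun b => h (inr b)) (rights L) - T) < eps / 2)%R).
  { apply H2; [now apply NoDup_rights |].
    intros b Hb; apply in_rights, IL, in_or_app; right; now apply in_map. }
  rewrite lsum_lefts_rights.
  replace (_ + _ - (S + T)) with ((lsum (fun a => h (inl a)) (lefts L) - S)
    + (lsum (fun b => h (inr b)) (rights L) - T)) by ring.
  eapply Rle_lt_trans; [apply Cmod_triangle | lra].
Qed.

End SumType.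

Section Products.
Context {X Y : Type}.
Local Open Scope R_scope.

Lemma NoDup_list_prod (A : list X) (B : list Y) : NoDup A -> NoDup B -> NoDup (list_prod A B).
Proof.
  intros NA NB; induction NA as [|x A Hx NA IH]; simpl; [constructor |].
  apply NoDup_app; auto.
  - apply FinFun.Injective_map_NoDup; auto; intros a b E; congruence.
  - intros p Hp Hq; apply in_map_iff in Hp as [y [<- _]].
    apply in_prod_iff in Hq; tauto.
Qed.

Lemma lsum_list_prod (f : X -> C) (g : Y -> C) A B :
  lsum (fun p => f (fst p) * g (snd p))%C (list_prod A B) = (lsum f A * lsum g B)%C.
Proof.
  induction A as [|x A IH]; simpl; [ring |].
  rewrite lsum_app, IH, lsum_map; simpl; rewrite lsum_scal; ring.
Qed.

Lemma lsumR_list_prod (a : X -> R) (b : Y -> R) A B :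
  lsumR (fun p => a (fst p) * b (snd p)) (list_prod A B) = lsumR a A * lsumR b B.
Proof.
  induction A as [|x A IH]; simpl; [ring |].
  rewrite lsumR_app, IH, lsumR_map; simpl; rewrite lsumR_scal; ring.
Qed.

Lemma lsumR_prod_le (a : X -> R) (b : Y -> R) L :
  (forall x, 0 <= a x) -> (forall y, 0 <= b y) -> NoDup L ->
  lsumR (fun p => a (fst p) * b (snd p)) L
  <= lsumR a (dedup (map fst L)) * lsumR b (dedup (map snd L)).
Proof.
  intros Ha Hb NL; rewrite <- lsumR_list_prod.
  apply lsumR_incl; auto.
  - intros p; apply Rmult_le_pos; auto.
  - apply NoDup_list_prod; apply NoDup_dedup.
  - intros [x y] Hp; apply in_prod; apply in_dedup;
    [change x with (fst (x, y)) | change y with (snd (x, y))]; now apply in_map.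
Qed.

Lemma abs_tail_le_prod (f : X -> C) (g : Y -> C) A B ef eg L :
  abs_tail_le f A ef -> abs_tail_le g B eg -> NoDup L ->
  (forall p, In p L -> ~ In (fst p) A /\ ~ In (snd p) B) ->
  lsumR (fun p => Cmod (f (fst p) * g (snd p))) L <= ef * eg.
Proof.
  intros Hf Hg NL Hout.
  assert (Tf : lsumR (fun x => Cmod (f x)) (dedup (map fst L)) <= ef).
  { apply Hf; [apply NoDup_dedup |].
    intros x Hx; apply in_dedup, in_map_iff in Hx as [p [<- Hp]]; apply Hout, Hp. }
  assert (Tg : lsumR (fun y => Cmod (g y)) (dedup (map snd L)) <= eg).
  { apply Hg; [apply NoDup_dedup |].
    intros y Hy; apply in_dedup, in_map_iff in Hy as [p [<- Hp]]; apply Hout, Hp. }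
  eapply Rle_trans.
  - apply lsumR_le with (v := fun p => Cmod (f (fst p)) * Cmod (g (snd p))).
    intros p _; right; apply Cmod_mult.
  - eapply Rle_trans;
      [exact (lsumR_prod_le (fun x => Cmod (f x)) (fun y => Cmod (g y)) L
                (fun _ => Cmod_ge_0 _) (fun _ => Cmod_ge_0 _) NL) |].
    apply Rmult_le_compat; auto; apply lsumR_nonneg; intros; apply Cmod_ge_0.
Qed.

Lemma abs_summable_prod (f : X -> C) (g : Y -> C) :
  abs_summable f -> abs_summable g -> abs_summable (fun p => f (fst p) * g (snd p))%C.
Proof.
  intros Hf Hg eps Heps.
  destruct (abs_summable_bounded f Hf) as [Bf HBf].
  destruct (abs_summable_bounded g Hg) as [Bg HBg].
  assert (Bf0 : 0 <= Bf) by (apply (HBf []); [constructor | contradiction]).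
  assert (Bg0 : 0 <= Bg) by (apply (HBg []); [constructor | contradiction]).
  set (d := eps / (Bf + Bg + 1)).
  assert (Hd : 0 < d) by (apply Rdiv_lt_0_compat; lra).
  destruct (Hf d Hd) as [A HA]; destruct (Hg d Hd) as [B HB].
  exists (list_prod A B); intros L NL Hout.
  assert (Hout' : forall p, In p L -> In (fst p) A -> ~ In (snd p) B).
  { intros [x y] Hp HxA HyB; apply (Hout _ Hp), in_prod; auto. }
  rewrite (lsumR_filter _ (fun p => memb A (fst p)) L).
  apply Rle_trans with (Bf * d + d * Bg).
  - apply Rplus_le_compat.
    + apply (abs_tail_le_prod f g [] B); auto; [now apply NoDup_filter |].
      intros p Hp; apply filter_In in Hp as [Hp HpA]; apply memb_spec in HpA; auto.
    + apply (abs_tail_le_prod f g A []); auto; [now apply NoDup_filter |].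
      intros p Hp; apply filter_In in Hp as [_ HpA]; split; [| auto].
      rewrite <- memb_spec; destruct (memb A (fst p)); discriminate.
  - unfold d; apply Rmult_le_reg_r with (Bf + Bg + 1); [lra |].
    field_simplify; nra.
Qed.

Lemma Cmod_mul_sub_le (U V S T : C) d :
  Cmod (U - S) <= d -> Cmod (V - T) <= d -> d <= 1 ->
  Cmod (U * V - S * T) <= d * (Cmod S + Cmod T + 1).
Proof.
  intros HU HV Hd.
  replace (U * V - S * T)%C with ((U - S) * V + S * (V - T))%C by ring.
  eapply Rle_trans; [apply Cmod_triangle |]; rewrite !Cmod_mult.
  assert (HVb : Cmod V <= Cmod T + 1).
  { replace V with (T + (V - T))%C by ring.
    eapply Rle_trans; [apply Cmod_triangle | lra]. }
  pose proof (Cmod_ge_0 (U - S)); pose proof (Cmod_ge_0 V); pose proof (Cmod_ge_0 S).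
  assert (Cmod (U - S) * Cmod V <= d * (Cmod T + 1)) by (apply Rmult_le_compat; lra).
  assert (Cmod S * Cmod (V - T) <= Cmod S * d) by (apply Rmult_le_compat_l; lra).
  lra.
Qed.

Lemma is_usum_prod (f : X -> C) (g : Y -> C) S T :
  is_usum f S -> is_usum g T -> abs_summable f -> abs_summable g ->
  is_usum (fun p => f (fst p) * g (snd p))%C (S * T).
Proof.
  intros HS HT Af Ag eps Heps.
  set (d := Rmin 1 (eps / (2 * (Cmod S + Cmod T + 1)))).
  assert (HST : 0 < Cmod S + Cmod T + 1)
    by (pose proof (Cmod_ge_0 S); pose proof (Cmod_ge_0 T); lra).
  assert (Hd : 0 < d) by (apply Rmin_glb_lt; [lra | apply Rdiv_lt_0_compat; lra]).
  assert (Hd1 : d <= 1) by apply Rmin_l.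
  assert (Hdeps : d * (Cmod S + Cmod T + 1) <= eps / 2).
  { apply Rle_trans with (eps / (2 * (Cmod S + Cmod T + 1)) * (Cmod S + Cmod T + 1)).
    - apply Rmult_le_compat_r; [lra | apply Rmin_r].
    - right; field; lra. }
  destruct (HS d Hd) as [A0 HA0]; destruct (HT d Hd) as [B0 HB0].
  destruct (abs_summable_prod f g Af Ag (eps / 4)) as [C0 HC0]; [lra |].
  (* A x B contains C0, so the terms outside A x B form a small absolute tail. *)
  set (A := dedup (A0 ++ map fst C0)); set (B := dedup (B0 ++ map snd C0)).
  assert (NAB : NoDup (list_prod A B)) by (apply NoDup_list_prod; apply NoDup_dedup).
  exists (list_prod A B); intros L NL IL.
  assert (Htail : abs_tail_le (fun p => f (fst p) * g (snd p))%C (list_prod A B) (eps / 4)).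
  { apply (abs_tail_le_mono _ C0); auto.
    intros [x y] Hp; apply in_prod; apply in_dedup, in_or_app; right;
    [change x with (fst (x, y)) | change y with (snd (x, y))]; now apply in_map. }
  pose proof (lsum_close_of_abs_tail _ _ L _ Htail NAB NL IL) as Hclose.
  rewrite lsum_list_prod in Hclose.
  assert (EA : Cmod (lsum f A - S) < d).
  { apply HA0; [apply NoDup_dedup | intros x Hx; apply in_dedup, in_or_app; auto]. }
  assert (EB : Cmod (lsum g B - T) < d).
  { apply HB0; [apply NoDup_dedup | intros x Hx; apply in_dedup, in_or_app; auto]. }
  set (fg := fun p : X * Y => (f (fst p) * g (snd p))%C) in *.
  pose proof (Cmod_mul_sub_le (lsum f A) (lsum g B) S T d (Rlt_le _ _ EA) (Rlt_le _ _ EB) Hd1).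
  replace (lsum fg L - S * T)%C
    with ((lsum fg L - lsum f A * lsum g B) + (lsum f A * lsum g B - S * T))%C by ring.
  eapply Rle_lt_trans; [apply Cmod_triangle | lra].
Qed.

End Products.

(** * Series over Z with geometric decay *)

Definition zrange (N : nat) : list Z :=
  map (fun k => Z.of_nat k - Z.of_nat N)%Z (seq 0 (2 * N + 1)).

Lemma NoDup_zrange N : NoDup (zrange N).
Proof. apply FinFun.Injective_map_NoDup; [intros a b E; lia | apply seq_NoDup]. Qed.

Lemma in_zrange N m : In m (zrange N) <-> (Z.abs_nat m <= N)%nat.
Proof.
  unfold zrange; rewrite in_map_iff; split.
  - intros [k [<- Hk]]; apply in_seq in Hk; lia.
  - intros H; exists (Z.to_nat (m + Z.of_nat N)); rewrite in_seq; lia.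
Qed.

Lemma incl_zrange N M : (N <= M)%nat -> incl (zrange N) (zrange M).
Proof. intros H m; rewrite !in_zrange; lia. Qed.

Lemma sum_n_lsum (g : nat -> C) n : sum_n g n = lsum g (seq 0 (S n)).
Proof.
  induction n as [|n IH]; [rewrite sum_O; simpl; ring |].
  rewrite sum_Sn, IH, (seq_S (S n) 0), lsum_app; simpl.
  change plus with Cplus; ring.
Qed.

Lemma partial_Z_zrange f N : partial_Z f N = lsum f (zrange N).
Proof.
  unfold partial_Z, zrange; rewrite sum_n_lsum, lsum_map.
  now replace (S (2 * N)) with (2 * N + 1)%nat by lia.
Qed.

Section GeometricTails.
Local Open Scope R_scope.

Lemma lsumR_pow_seq r a n : 0 <= r < 1 -> lsumR (pow r) (seq a n) <= r ^ a / (1 - r).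
Proof.
  intros Hr; revert a; induction n as [|n IH]; intros a; simpl.
  - apply Rdiv_le_0_compat; [apply pow_le |]; lra.
  - specialize (IH (S a)); simpl in IH.
    replace (r ^ a / (1 - r)) with (r ^ a + r * r ^ a / (1 - r)) by (field; lra).
    lra.
Qed.

Lemma lsumR_pow_abs_tail r N L : 0 <= r < 1 -> NoDup L ->
  (forall m, In m L -> (N < Z.abs_nat m)%nat) ->
  lsumR (fun m => r ^ Z.abs_nat m) L <= 2 * (r ^ S N / (1 - r)).
Proof.
  intros Hr NL HL.
  set (M := list_max (map Z.abs_nat L)).
  assert (HM : forall m, In m L -> (Z.abs_nat m <= M)%nat).
  { intros m Hm; assert (Hmax : (M <= M)%nat) by lia.
    apply list_max_le, Forall_forall with (x := Z.abs_nat m) in Hmax; auto.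
    now apply in_map. }
  set (pos := map Z.of_nat (seq (S N) M)).
  set (neg := map (fun k => (- Z.of_nat k)%Z) (seq (S N) M)).
  apply Rle_trans with (lsumR (fun m => r ^ Z.abs_nat m) (pos ++ neg)).
  - apply lsumR_incl; auto; [intros; apply pow_le; lra | |].
    + apply NoDup_app;
        try (apply FinFun.Injective_map_NoDup; [intros a b E; lia | apply seq_NoDup]).
      intros m Hp Hn; apply in_map_iff in Hp as [a [<- Ha]]; apply in_map_iff in Hn as [b [E Hb]].
      apply in_seq in Ha; lia.
    + intros m Hm; specialize (HL m Hm); specialize (HM m Hm); apply in_or_app.
      destruct (Z_le_gt_dec 0 m); [left | right]; apply in_map_iff;
        exists (Z.abs_nat m); rewrite in_seq; split; lia.
  - rewrite lsumR_app; unfold pos, neg; rewrite !lsumR_map.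
    rewrite (lsumR_ext _ (pow r) (seq (S N) M)) by (intros k _; f_equal; lia).
    rewrite (lsumR_ext (fun k => r ^ Z.abs_nat (- Z.of_nat k)) (pow r) (seq (S N) M))
      by (intros k _; f_equal; lia).
    pose proof (lsumR_pow_seq r (S N) M Hr); lra.
Qed.

Lemma pow_tail_eventually_lt c r eps : Rabs r < 1 -> 0 < eps ->
  exists N, forall n, (N <= n)%nat -> c * r ^ n < eps.
Proof.
  intros Hr Heps.
  pose proof (is_lim_seq_scal_l _ c _ (is_lim_seq_geom r Hr)) as Hlim.
  simpl in Hlim; rewrite Rmult_0_r in Hlim.
  apply is_lim_seq_spec in Hlim; destruct (Hlim (mkposreal eps Heps)) as [N HN].
  exists N; intros n Hn; specialize (HN n Hn); simpl in HN.
  rewrite Rminus_0_r in HN; apply Rabs_lt_between in HN; lra.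
Qed.

End GeometricTails.

Definition geom_decay (f : Z -> C) : Prop :=
  exists K r, (0 <= r < 1)%R /\ forall m, (Cmod (f m) <= K * r ^ Z.abs_nat m)%R.

Section GeometricDecay.
Local Open Scope R_scope.
Context (f : Z -> C) (K r : R) (Hr : 0 <= r < 1)
  (Hf : forall m, Cmod (f m) <= K * r ^ Z.abs_nat m).

Lemma geom_abs_tail N : abs_tail_le f (zrange N) (2 * K / (1 - r) * r ^ S N).
Proof.
  intros L NL HL.
  assert (HK : 0 <= K) by (specialize (Hf 0%Z); pose proof (Cmod_ge_0 (f 0%Z)); simpl in Hf; lra).
  eapply Rle_trans; [apply lsumR_le with (v := fun m => K * r ^ Z.abs_nat m); auto |].
  rewrite lsumR_scal.
  assert (HN : forall m, In m L -> (N < Z.abs_nat m)%nat)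
    by (intros m Hm; specialize (HL m Hm); rewrite in_zrange in HL; lia).
  pose proof (lsumR_pow_abs_tail r N L Hr NL HN).
  replace (2 * K / (1 - r) * r ^ S N) with (K * (2 * (r ^ S N / (1 - r)))) by (field; lra).
  now apply Rmult_le_compat_l.
Qed.

Lemma geom_tail_eventually_lt eps : 0 < eps ->
  exists N, forall n, (N <= n)%nat -> 2 * K / (1 - r) * r ^ S n < eps.
Proof.
  intros Heps.
  destruct (pow_tail_eventually_lt (2 * K / (1 - r)) r eps) as [N HN]; auto.
  { rewrite Rabs_right; lra. }
  exists N; intros n Hn; apply HN; lia.
Qed.

Lemma partial_Z_close N L : NoDup L -> incl (zrange N) L ->
  Cmod (lsum f L - partial_Z f N) <= 2 * K / (1 - r) * r ^ S N.
Proof.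
  intros NL IL; rewrite partial_Z_zrange.
  apply lsum_close_of_abs_tail; auto using geom_abs_tail, NoDup_zrange.
Qed.

End GeometricDecay.

Lemma geom_decay_abs_summable f : geom_decay f -> abs_summable f.
Proof.
  intros [K [r [Hr Hf]]] eps Heps.
  destruct (geom_tail_eventually_lt K r Hr eps Heps) as [N HN].
  exists (zrange N); intros L NL HL.
  apply Rlt_le, Rle_lt_trans with (2 * K / (1 - r) * r ^ S N)%R; [| apply HN; lia].
  now apply geom_abs_tail.
Qed.

Section CauchySequences.
Local Open Scope R_scope.

Lemma cauchy_C_converges (P : nat -> C) :
  (forall eps, 0 < eps -> exists N, forall n m, (N <= n)%nat -> (N <= m)%nat ->
     Cmod (P n - P m) < eps) ->
  forall eps, 0 < eps -> exists N, forall n, (N <= n)%nat ->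
    Cmod (P n - (real (Lim_seq (fun k => Re (P k))), real (Lim_seq (fun k => Im (P k))))) < eps.
Proof.
  intros HC.
  assert (Hpart : forall proj : C -> R,
    (forall c, Rabs (proj c) <= Cmod c) -> (forall a b, proj (a - b)%C = proj a - proj b) ->
    forall eps, 0 < eps -> exists N, forall n, (N <= n)%nat ->
      Rabs (proj (P n) - real (Lim_seq (fun k => proj (P k)))) < eps).
  { intros proj Hle Hlin eps Heps.
    assert (Hex : ex_finite_lim_seq (fun k => proj (P k))).
    { apply ex_lim_seq_cauchy_corr; intros e.
      destruct (HC e (cond_pos e)) as [N HN]; exists N; intros n m Hn Hm.
      rewrite <- Hlin; eapply Rle_lt_trans; [apply Hle | auto]. }
    destruct Hex as [l Hl]; rewrite (is_lim_seq_unique _ _ Hl).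
    apply is_lim_seq_spec in Hl; exact (Hl (mkposreal eps Heps)). }
  intros eps Heps.
  destruct (Hpart Re re_le_Cmod (fun a b => eq_refl) (eps / 2)) as [N1 H1]; [lra |].
  destruct (Hpart Im Im_le_Cmod (fun a b => eq_refl) (eps / 2)) as [N2 H2]; [lra |].
  exists (N1 + N2)%nat; intros n Hn.
  specialize (H1 n ltac:(lia)); specialize (H2 n ltac:(lia)).
  set (lr := real (Lim_seq (fun k => Re (P k)))) in *.
  set (li := real (Lim_seq (fun k => Im (P k)))) in *.
  apply Rle_lt_trans with (Rabs (Re (P n) - lr) + Rabs (Im (P n) - li));
    [apply Cmod_le_Rabs_parts | lra].
Qed.

End CauchySequences.

Lemma geom_decay_is_usum f : geom_decay f -> is_usum f (sum_Z f).
Proof.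
  intros [K [r [Hr Hf]]].
  set (tail N := (2 * K / (1 - r) * r ^ S N)%R).
  assert (Hpartial : forall N n, (N <= n)%nat ->
    (Cmod (partial_Z f n - partial_Z f N) <= tail N)%R).
  { intros N n Hn; rewrite (partial_Z_zrange f n).
    apply partial_Z_close; auto using NoDup_zrange, incl_zrange. }
  assert (Hcauchy : forall eps, (0 < eps)%R -> exists N, forall n m, (N <= n)%nat -> (N <= m)%nat ->
    (Cmod (partial_Z f n - partial_Z f m) < eps)%R).
  { intros eps Heps; destruct (geom_tail_eventually_lt K r Hr (eps / 2)) as [N HN]; [lra |].
    exists N; intros n m Hn Hm.
    replace (partial_Z f n - partial_Z f m)
      with ((partial_Z f n - partial_Z f N) - (partial_Z f m - partial_Z f N)) by ring.
    eapply Rle_lt_trans; [apply Cmod_sub_le |].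
    pose proof (Hpartial N n Hn); pose proof (Hpartial N m Hm); pose proof (HN N (le_n N)).
    unfold tail in *; lra. }
  intros eps Heps.
  destruct (cauchy_C_converges _ Hcauchy (eps / 2)) as [N1 H1]; [lra |].
  destruct (geom_tail_eventually_lt K r Hr (eps / 2)) as [N2 H2]; [lra |].
  exists (zrange (N1 + N2)); intros L NL IL.
  replace (lsum f L - sum_Z f)
    with ((lsum f L - partial_Z f (N1 + N2)) + (partial_Z f (N1 + N2) - sum_Z f)) by ring.
  eapply Rle_lt_trans; [apply Cmod_triangle |].
  pose proof (partial_Z_close f K r Hr Hf (N1 + N2) L NL IL).
  specialize (H1 (N1 + N2)%nat ltac:(lia)); specialize (H2 (N1 + N2)%nat ltac:(lia)).
  unfold sum_Z; lra.
Qed.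

Lemma is_usum_sum_Z_mul f g : geom_decay f -> geom_decay g ->
  is_usum (fun p => f (fst p) * g (snd p)) (sum_Z f * sum_Z g).
Proof. intros; apply is_usum_prod; auto using geom_decay_is_usum, geom_decay_abs_summable. Qed.

Lemma sum_Z_mul_split (e : (Z * Z) + (Z * Z) -> Z * Z) (e' : Z * Z -> (Z * Z) + (Z * Z))
  f g f1 g1 f2 g2 c :
  (forall p, e (e' p) = p) -> (forall s, e' (e s) = s) ->
  geom_decay f -> geom_decay g -> geom_decay f1 -> geom_decay g1 ->
  geom_decay f2 -> geom_decay g2 ->
  (forall j k, f (fst (e (inl (j, k)))) * g (snd (e (inl (j, k)))) = f1 j * g1 k) ->
  (forall j k, f (fst (e (inr (j, k)))) * g (snd (e (inr (j, k)))) = c * (f2 j * g2 k)) ->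
  sum_Z f * sum_Z g = sum_Z f1 * sum_Z g1 + c * (sum_Z f2 * sum_Z g2).
Proof.
  intros K1 K2 Hf Hg Hf1 Hg1 Hf2 Hg2 Hl Hr.
  apply (is_usum_unique (fun s => f (fst (e s)) * g (snd (e s)))).
  - exact (is_usum_bij e e' (fun p => f (fst p) * g (snd p)) _ K1 K2
             (is_usum_sum_Z_mul f g Hf Hg)).
  - apply (is_usum_ext (fun s => match s with
                                 | inl p => f1 (fst p) * g1 (snd p)
                                 | inr p => c * (f2 (fst p) * g2 (snd p)) end)).
    + intros [[j k] | [j k]]; symmetry; auto.
    + apply is_usum_sum_type; [| apply is_usum_scal]; now apply is_usum_sum_Z_mul.
Qed.

(** * Theta series *)

Lemma cexp_add a b : cexp (a + b) = cexp a * cexp b.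
Proof.
  destruct a as [a1 a2], b as [b1 b2]; unfold cexp, Cmult; simpl.
  rewrite exp_plus, cos_plus, sin_plus; f_equal; ring.
Qed.

Lemma Cmod_cexp w : Cmod (cexp w) = exp (Re w).
Proof.
  unfold cexp, Cmod; cbn [fst snd].
  replace ((exp (Re w) * cos (Im w)) ^ 2 + (exp (Re w) * sin (Im w)) ^ 2)%R
    with (exp (Re w) ^ 2 * (sin (Im w) ^ 2 + cos (Im w) ^ 2))%R by ring.
  rewrite <- !Rsqr_pow2, sin2_cos2, Rmult_1_r, Rsqr_pow2.
  apply sqrt_pow2; left; apply exp_pos.
Qed.

Lemma qpow_add z s t : qpow z s * qpow z t = qpow z (s + t).
Proof. unfold qpow; rewrite <- cexp_add, RtoC_plus; f_equal; ring. Qed.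

Lemma qpow_double z t : qpow (2 * z) t = qpow z (2 * t).
Proof. unfold qpow; rewrite RtoC_mult; f_equal; ring. Qed.

Lemma qpow_mul_double z a b c d : (a + b = 2 * (c + d))%R ->
  qpow z a * qpow z b = qpow (2 * z) c * qpow (2 * z) d.
Proof. intros H; now rewrite !qpow_add, qpow_double, H. Qed.

Lemma Cmod_qpow z t : Cmod (qpow z t) = exp (- (PI * Im z * t)).
Proof. unfold qpow; rewrite Cmod_cexp; f_equal; destruct z as [x y]; simpl; ring. Qed.

Lemma exp_mul_INR a n : exp (a * INR n) = (exp a ^ n)%R.
Proof.
  induction n as [|n IH]; [simpl; now rewrite Rmult_0_r, exp_0 |].
  rewrite S_INR, Rmult_plus_distr_l, Rmult_1_r, exp_plus, IH; simpl; ring.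
Qed.

Lemma exp_le_compat x y : (x <= y)%R -> (exp x <= exp y)%R.
Proof. intros [H | ->]; [left; now apply exp_increasing | apply Rle_refl]. Qed.

Lemma Cmod_qpow_le z t k c : (0 < Im z)%R -> (INR k - c <= t)%R ->
  (Cmod (qpow z t) <= exp (PI * Im z * c) * exp (- (PI * Im z)) ^ k)%R.
Proof.
  intros Hz Hk; rewrite Cmod_qpow, <- exp_mul_INR, <- exp_plus.
  pose proof PI_RGT_0; assert (0 < PI * Im z)%R by nra.
  apply exp_le_compat; nra.
Qed.

Lemma Z_even_cases x : if Z.even x then exists t, x = (2 * t)%Z else exists t, x = (2 * t + 1)%Z.
Proof.
  destruct (Z.even x) eqn:E; [now apply Z.even_spec |].
  apply Z.odd_spec; now rewrite <- Z.negb_even, E.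
Qed.

Lemma Z_even_double j : Z.even (2 * j) = true.
Proof. now rewrite Z.even_mul. Qed.

Lemma Z_even_double_succ j : Z.even (2 * j + 1) = false.
Proof. now rewrite Z.even_add, Z.even_mul. Qed.

Definition zsign (m : Z) : C := if Z.even m then 1 else -1.

Lemma zsign_add a b : zsign (a + b) = zsign a * zsign b.
Proof. unfold zsign; rewrite Z.even_add; destruct (Z.even a), (Z.even b); simpl; ring. Qed.

Lemma zsign_double j : zsign (2 * j) = 1.
Proof. unfold zsign; now rewrite Z_even_double. Qed.

Lemma zsign_double_succ j : zsign (2 * j + 1) = -1.
Proof. unfold zsign; now rewrite Z_even_double_succ. Qed.

Lemma Cmod_zsign m : Cmod (zsign m) = 1%R.
Proof.
  unfold zsign; destruct (Z.even m); [apply Cmod_1 |].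
  rewrite Cmod_R, Rabs_left by lra; ring.
Qed.

Lemma neg1_pow_sq m : pow_n (RtoC (-1)) (Z.to_nat (m * m)) = zsign m.
Proof.
  assert (Hsq : RtoC (-1) ^ 2 = 1) by (simpl; ring).
  rewrite pow_n_Cpow; unfold zsign; pose proof (Z_even_cases m) as Hm.
  destruct (Z.even m); destruct Hm as [t ->].
  - replace (Z.to_nat (2 * t * (2 * t))) with (2 * Z.to_nat (2 * t * t))%nat by nia.
    now rewrite Cpow_mult_r, Hsq, Cpow_1_l.
  - replace (Z.to_nat ((2 * t + 1) * (2 * t + 1)))
      with (2 * Z.to_nat (2 * t * (t + 1)) + 1)%nat by nia.
    rewrite Cpow_add_r, Cpow_mult_r, Hsq, Cpow_1_l; simpl; ring.
Qed.

Definition theta2_term z (m : Z) : C := qpow z ((IZR m + /2) ^ 2).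
Definition theta3_term z (m : Z) : C := qpow z (IZR m ^ 2).
Definition theta4_term z (m : Z) : C := zsign m * theta3_term z m.

Lemma theta2_sum_Z z : theta2 z = sum_Z (theta2_term z).
Proof. reflexivity. Qed.

Lemma theta3_sum_Z z : theta3 z = sum_Z (theta3_term z).
Proof. reflexivity. Qed.

Lemma theta4_sum_Z z : theta4 z = sum_Z (theta4_term z).
Proof.
  unfold theta4; f_equal; apply functional_extensionality; intros m.
  now rewrite neg1_pow_sq.
Qed.

Lemma INR_abs_nat m : INR (Z.abs_nat m) = IZR (Z.abs m).
Proof. now rewrite INR_IZR_INZ, Zabs2Nat.id_abs. Qed.

Section ThetaDecay.
Context (z : C) (hz : (0 < Im z)%R).

Lemma geom_decay_qpow (t : Z -> R) c :
  (forall m, IZR (Z.abs m) - c <= t m)%R -> geom_decay (fun m => qpow z (t m)).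
Proof.
  intros Ht; exists (exp (PI * Im z * c)), (exp (- (PI * Im z))); split.
  - split; [left; apply exp_pos |].
    rewrite <- exp_0; apply exp_increasing; pose proof PI_RGT_0; nra.
  - intros m; apply Cmod_qpow_le; auto; rewrite INR_abs_nat; apply Ht.
Qed.

Lemma geom_decay_theta3_term : geom_decay (theta3_term z).
Proof.
  apply (geom_decay_qpow _ 0); intros m; rewrite Rminus_0_r.
  replace (IZR m ^ 2)%R with (IZR (m * m)) by (rewrite mult_IZR; ring).
  apply IZR_le; nia.
Qed.

Lemma geom_decay_theta2_term : geom_decay (theta2_term z).
Proof.
  apply (geom_decay_qpow _ 1); intros m.
  destruct (Z_le_gt_dec 0 m) as [Hm | Hm].
  - rewrite Z.abs_eq by lia; apply IZR_le in Hm; nra.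
  - rewrite Z.abs_neq, opp_IZR by lia.
    assert (Hm' : (IZR m + 1 <= 0)%R) by (rewrite <- plus_IZR; apply IZR_le; lia); nra.
Qed.

Lemma geom_decay_theta4_term : geom_decay (theta4_term z).
Proof.
  destruct geom_decay_theta3_term as [K [r [Hr Hf]]].
  exists K, r; split; auto; intros m.
  unfold theta4_term; rewrite Cmod_mult, Cmod_zsign, Rmult_1_l; apply Hf.
Qed.

End ThetaDecay.

(** * Jacobi's identity *)

(* [(j, k) |-> (j + k, j - k)] is a bijection onto the pairs of even sum, and its shift by
   [(1, 0)] onto those of odd sum; as (j+k)^2 + (j-k)^2 = 2 (j^2 + k^2), it turns a square of
   a theta series at z into theta series at 2z.  [rot_split_half] does the same for the
   half-integer lattice of theta2. *)
Definition rot_split (s : (Z * Z) + (Z * Z)) : Z * Z :=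
  match s with
  | inl (j, k) => (j + k, j - k)
  | inr (j, k) => (j + k + 1, j - k)
  end%Z.

Definition rot_split_inv (p : Z * Z) : (Z * Z) + (Z * Z) :=
  let (m, n) := p in
  if Z.even (m + n)%Z then inl ((m + n) / 2, (m - n) / 2)%Z
  else inr ((m + n - 1) / 2, (m - n - 1) / 2)%Z.

Definition rot_split_half (s : (Z * Z) + (Z * Z)) : Z * Z :=
  match s with
  | inl (j, k) => (j + k, j - k - 1)
  | inr (j, k) => (j + k, j - k)
  end%Z.

Definition rot_split_half_inv (p : Z * Z) : (Z * Z) + (Z * Z) :=
  let (m, n) := p in
  if Z.even (m + n)%Z then inr ((m + n) / 2, (m - n) / 2)%Z
  else inl ((m + n + 1) / 2, (m - n - 1) / 2)%Z.

Lemma rot_split_inv_r p : rot_split (rot_split_inv p) = p.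
Proof.
  destruct p as [m n]; unfold rot_split_inv; pose proof (Z_even_cases (m + n)) as H.
  destruct (Z.even (m + n)); destruct H as [t Ht]; simpl; f_equal; Z.div_mod_to_equations; lia.
Qed.

Lemma rot_split_inv_l s : rot_split_inv (rot_split s) = s.
Proof.
  destruct s as [[j k] | [j k]]; unfold rot_split, rot_split_inv; cbv beta iota.
  - replace (j + k + (j - k))%Z with (2 * j)%Z by ring; rewrite Z_even_double.
    f_equal; f_equal; Z.div_mod_to_equations; lia.
  - replace (j + k + 1 + (j - k))%Z with (2 * j + 1)%Z by ring; rewrite Z_even_double_succ.
    f_equal; f_equal; Z.div_mod_to_equations; lia.
Qed.

Lemma rot_split_half_inv_r p : rot_split_half (rot_split_half_inv p) = p.
Proof.
  destruct p as [m n]; unfold rot_split_half_inv; pose proof (Z_even_cases (m + n)) as H.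
  destruct (Z.even (m + n)); destruct H as [t Ht]; simpl; f_equal; Z.div_mod_to_equations; lia.
Qed.

Lemma rot_split_half_inv_l s : rot_split_half_inv (rot_split_half s) = s.
Proof.
  destruct s as [[j k] | [j k]]; unfold rot_split_half, rot_split_half_inv; cbv beta iota.
  - replace (j + k + (j - k - 1))%Z with (2 * (j - 1) + 1)%Z by ring;
      rewrite Z_even_double_succ.
    f_equal; f_equal; Z.div_mod_to_equations; lia.
  - replace (j + k + (j - k))%Z with (2 * j)%Z by ring; rewrite Z_even_double.
    f_equal; f_equal; Z.div_mod_to_equations; lia.
Qed.

Section Duplication.
Context (z : C) (hz : (0 < Im z)%R).

Let hz2 : (0 < Im (2 * z))%R.
Proof. destruct z as [x y]; simpl in *; lra. Qed.

Lemma theta3_sq_double :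
  theta3 z * theta3 z = theta3 (2 * z) * theta3 (2 * z) + theta2 (2 * z) * theta2 (2 * z).
Proof.
  rewrite <- (Cmult_1_l (theta2 (2 * z) * theta2 (2 * z))), !theta2_sum_Z, !theta3_sum_Z.
  apply (sum_Z_mul_split rot_split rot_split_inv);
    auto using rot_split_inv_r, rot_split_inv_l, geom_decay_theta2_term, geom_decay_theta3_term;
    intros j k; simpl; rewrite ?Cmult_1_l; unfold theta2_term, theta3_term;
    apply qpow_mul_double; rewrite ?plus_IZR, ?minus_IZR; field.
Qed.

Lemma theta4_sq_double :
  theta4 z * theta4 z = theta3 (2 * z) * theta3 (2 * z) + -1 * (theta2 (2 * z) * theta2 (2 * z)).
Proof.
  rewrite !theta4_sum_Z, !theta2_sum_Z, !theta3_sum_Z.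
  apply (sum_Z_mul_split rot_split rot_split_inv);
    auto using rot_split_inv_r, rot_split_inv_l, geom_decay_theta2_term, geom_decay_theta3_term,
      geom_decay_theta4_term;
    intros j k; simpl; unfold theta4_term.
  - replace (zsign (j + k) * theta3_term z (j + k) * (zsign (j - k) * theta3_term z (j - k)))
      with (zsign (j + k + (j - k)) * (theta3_term z (j + k) * theta3_term z (j - k)))
      by (rewrite zsign_add; ring).
    replace (j + k + (j - k))%Z with (2 * j)%Z by ring; rewrite zsign_double, Cmult_1_l.
    unfold theta3_term; apply qpow_mul_double; rewrite ?plus_IZR, ?minus_IZR; field.
  - replace (zsign (j + k + 1) * theta3_term z (j + k + 1)
             * (zsign (j - k) * theta3_term z (j - k)))
      with (zsign (j + k + 1 + (j - k)) * (theta3_term z (j + k + 1) * theta3_term z (j - k)))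
      by (rewrite zsign_add; ring).
    replace (j + k + 1 + (j - k))%Z with (2 * j + 1)%Z by ring; rewrite zsign_double_succ.
    f_equal; unfold theta2_term, theta3_term; apply qpow_mul_double;
      rewrite ?plus_IZR, ?minus_IZR; field.
Qed.

Lemma theta2_sq_double :
  theta2 z * theta2 z = theta3 (2 * z) * theta2 (2 * z) + 1 * (theta2 (2 * z) * theta3 (2 * z)).
Proof.
  rewrite !theta2_sum_Z, !theta3_sum_Z.
  apply (sum_Z_mul_split rot_split_half rot_split_half_inv);
    auto using rot_split_half_inv_r, rot_split_half_inv_l, geom_decay_theta2_term,
      geom_decay_theta3_term;
    intros j k; simpl; rewrite ?Cmult_1_l; unfold theta2_term, theta3_term;
    apply qpow_mul_double; rewrite ?plus_IZR, ?minus_IZR; field.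
Qed.

End Duplication.

Lemma jacobi_theta z : (0 < Im z)%R -> theta3 z ^ 4 = theta2 z ^ 4 + theta4 z ^ 4.
Proof.
  intros hz.
  replace (theta3 z ^ 4) with ((theta3 z * theta3 z) * (theta3 z * theta3 z)) by ring.
  replace (theta2 z ^ 4) with ((theta2 z * theta2 z) * (theta2 z * theta2 z)) by ring.
  replace (theta4 z ^ 4) with ((theta4 z * theta4 z) * (theta4 z * theta4 z)) by ring.
  rewrite (theta3_sq_double z hz), (theta2_sq_double z hz), (theta4_sq_double z hz); ring.
Qed.

(** * The recurrence *)

Lemma power_sum_recurrence (a b c u v w : C) (s : nat -> C) :
  (forall k, s k = a * u ^ k + b * v ^ k + c * w ^ k) ->
  forall n, s (n + 3)%nat
    = (u + v + w) * s (n + 2)%nat - (u * v + v * w + w * u) * s (n + 1)%nat + u * v * w * s n.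
Proof. intros Hs n; rewrite !Hs, !Cpow_add_r; ring. Qed.

Lemma rho_power_sum z n :
  let D := (theta2 z * theta3 z * theta4 z) ^ 4 in
  rho n z = theta3 z ^ 12 / D * (theta3 z ^ 8) ^ n + (- (theta2 z ^ 12 / D)) * (theta2 z ^ 8) ^ n
            + (- (theta4 z ^ 12 / D)) * (theta4 z ^ 8) ^ n.
Proof.
  unfold rho; rewrite !(pow_n_Cpow _ (8 * (n + 1) + 4)), (pow_n_Cpow _ 4).
  replace (8 * (n + 1) + 4)%nat with (12 + 8 * n)%nat by lia.
  rewrite !Cpow_add_r, !Cpow_mult_r; unfold Cdiv; ring.
Qed.

Lemma E4_Cpow z : E4 z = / 2 * (theta2 z ^ 8 + theta3 z ^ 8 + theta4 z ^ 8).
Proof. reflexivity. Qed.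

Lemma two_neq_0 : RtoC 2 <> 0.
Proof. intros H; injection H; lra. Qed.

Lemma theta8_sum z : theta3 z ^ 8 + theta2 z ^ 8 + theta4 z ^ 8 = 2 * E4 z.
Proof. rewrite E4_Cpow; field; exact two_neq_0. Qed.

Lemma sum_sq_of_add (A B Cc : C) : A = B + Cc ->
  A ^ 2 * B ^ 2 + B ^ 2 * Cc ^ 2 + Cc ^ 2 * A ^ 2 = (/ 2 * (B ^ 2 + A ^ 2 + Cc ^ 2)) ^ 2.
Proof. intros ->; field; exact two_neq_0. Qed.

Lemma theta8_pair_sum z : (0 < Im z)%R ->
  theta3 z ^ 8 * theta2 z ^ 8 + theta2 z ^ 8 * theta4 z ^ 8 + theta4 z ^ 8 * theta3 z ^ 8
  = pow_n (E4 z) 2.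
Proof.
  intros hz; change (pow_n (E4 z) 2) with (E4 z ^ 2); rewrite E4_Cpow.
  replace 8%nat with (4 * 2)%nat by reflexivity; rewrite !Cpow_mult_r.
  now apply sum_sq_of_add, jacobi_theta.
Qed.

Lemma theta8_prod z : theta3 z ^ 8 * theta2 z ^ 8 * theta4 z ^ 8 = pow_n 2 8 * Delta24 z.
Proof.
  change (Delta24 z) with ((theta2 z * theta3 z * theta4 z / 2) ^ 8).
  rewrite pow_n_pow, RtoC_pow; field; exact two_neq_0.
Qed.

Theorem lemma2p3 (z : CC) (hz : (0 < Im z)%R) (n : nat) (hn : (3 <= n)%nat) :
  rho n z = 2 * E4 z * rho (n - 1) z - pow_n (E4 z) 2 * rho (n - 2) z
            + pow_n 2 8 * Delta24 z * rho (n - 3) z.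
Proof.
  destruct (Nat.le_exists_sub 3 n hn) as [k [-> _]].
  replace (k + 3 - 1)%nat with (k + 2)%nat by lia.
  replace (k + 3 - 2)%nat with (k + 1)%nat by lia.
  replace (k + 3 - 3)%nat with k by lia.
  pose proof (power_sum_recurrence _ _ _ _ _ _ (fun m => rho m z) (rho_power_sum z) k) as Hrec.
  cbv beta in Hrec; rewrite Hrec.
  now rewrite theta8_sum, (theta8_pair_sum z hz), theta8_prod.
Qed.
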